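(* Let $\Phi:[a,b]\to\mathbb{R}$ be continuous and nowhere zero, let $x_0\in(a,b)$, and let $\mathcal S_n=\{\mathcal Y_0(x_0,x),\dots,\mathcal Y_n(x_0,x)\}$ and $\widetilde{\mathcal S}_n=\{\widetilde{\mathcal Y}_0(x_0,x),\dots,\widetilde{\mathcal Y}_n(x_0,x)\}$ (as functions of $x$) be of class $C^n(a,b)$. Then each of the sets $\mathcal S_n$ and $\widetilde{\mathcal S}_n$ is linearly independent (as functions on $(a,b)$).
   Context: For $x_0,x\in[a,b]$ the $\Phi$-power functions are defined recursively by $X^{(0)}(x_0,x)\equiv 1$, $\widetilde X^{(0)}(x_0,x)\equiv 1$ and, for $n\ge 1$, $$X^{(n)}(x_0,x)=n\int_{x_0}^x X^{(n-1)}(x_0,\xi)\,\big(\Phi(\xi)\big)^{(-1)^n}\,d\xi,\qquad \widetilde X^{(n)}(x_0,x)=n\int_{x_0}^x \widetilde X^{(n-1)}(x_0,\xi)\,\Big(\frac{1}{\Phi(\xi)}\Big)^{(-1)^n}\,d\xi.$$ For $n\ge0$, $\mathcal Y_n=\widetilde X^{(n)}$ if $n$ is odd and $\mathcal Y_n=X^{(n)}$ if $n$ is even; $\widetilde{\mathcal Y}_n=X^{(n)}$ if $n$ is odd and $\widetilde{\mathcal Y}_n=\widetilde X^{(n)}$ if $n$ is even. In this part of the paper $\Phi$ is assumed real-valued. *)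

From Stdlib Require Import Reals.
From Coquelicot Require Import Coquelicot.
Open Scope R_scope.

(* Generic Phi-power recursion with weight F:
   P_0 = 1,  P_n(x) = n * \int_{x0}^x P_{n-1}(xi) * F(xi)^{(-1)^n} dxi,
   where F^{(-1)^n} is F if n is even and 1/F if n is odd. *)
Fixpoint PhiPowGen (F : R -> R) (x0 : R) (n : nat) (x : R) : R :=
  match n with
  | O => 1
  | S m => INR (S m) *
      RInt (fun xi => PhiPowGen F x0 m xi *
                      (if Nat.even (S m) then F xi else / F xi)) x0 x
  end.

Definition Xpow (Phi : R -> R) (x0 : R) (n : nat) (x : R) : R :=
  PhiPowGen Phi x0 n x.

Definition Xtpow (Phi : R -> R) (x0 : R) (n : nat) (x : R) : R :=
  PhiPowGen (fun t => / Phi t) x0 n x.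

Definition Ypow (Phi : R -> R) (x0 : R) (n : nat) (x : R) : R :=
  if Nat.odd n then Xtpow Phi x0 n x else Xpow Phi x0 n x.

Definition Ytpow (Phi : R -> R) (x0 : R) (n : nat) (x : R) : R :=
  if Nat.odd n then Xpow Phi x0 n x else Xtpow Phi x0 n x.

Definition Cn_on (n : nat) (a b : R) (f : R -> R) : Prop :=
  forall x, a < x < b ->
    (forall k, (k <= n)%nat -> ex_derive_n f k x) /\
    continuous (Derive_n f n) x.

Definition continuous_on_closed (a b : R) (Phi : R -> R) : Prop :=
  forall x, a <= x <= b ->
    filterlim Phi (within (fun y => a <= y <= b) (locally x)) (locally (Phi x)).

Definition lin_indep_on (a b : R) (n : nat) (f : nat -> R -> R) : Prop :=
  forall c : nat -> R,
    (forall x, a < x < b -> sum_f_R0 (fun k => c k * f k x) n = 0) ->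
    forall k, (k <= n)%nat -> c k = 0.

(* Write Y_m, Yt_m for the two families. Unfolding the parities, they obey the
   coupled recursion Y_(m+1) = (m+1) int_x0 Yt_m Phi and Yt_(m+1) = (m+1) int_x0 Y_m / Phi,
   so Y_(m+1) and Yt_(m+1) vanish at x0, Y_0 = Yt_0 = 1, and
   Y_(m+1)' = (m+1) Phi Yt_m, Yt_(m+1)' = (m+1) Y_m / Phi on (a, b).
   If sum_(k<=n) c_k Y_k = 0 on (a, b), evaluating at x0 gives c_0 = 0, and
   differentiating and dividing by Phi gives sum_(j<n) (j+1) c_(j+1) Yt_j = 0; induction
   on n, exchanging the roles of the two families, kills every coefficient. *)

From Stdlib Require Import Reals Lra Lia.
From Coquelicot Require Import Coquelicot.
Open Scope R_scope.

Lemma locally_open_interval (a b x : R) :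
  a < x < b -> locally x (fun y => a < y < b).
Proof.
  intros Hx.
  exact (open_and _ _ (open_gt a) (open_lt b) x Hx).
Qed.

Lemma continuous_on_closed_interior (a b : R) (f : R -> R) (x : R) :
  continuous_on_closed a b f -> a < x < b -> continuous f x.
Proof.
  intros Hf Hx P HP.
  specialize (Hf x ltac:(lra) P HP). unfold filtermap, within in *.
  generalize (filter_and _ _ Hf (locally_open_interval a b x Hx)).
  apply filter_imp. intros y [Hy Hab]. apply Hy. lra.
Qed.

Lemma is_derive_RInt_open_interval (a b x0 x : R) (h : R -> R) :
  (forall y, a < y < b -> continuous h y) -> a < x0 < b -> a < x < b ->
  is_derive (fun y => RInt h x0 y) x (h x).
Proof.
  intros Hh Hx0 Hx.
  apply (is_derive_RInt h _ x0 x); [|now apply Hh].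
  generalize (locally_open_interval a b x Hx). apply filter_imp.
  intros y Hy. apply (RInt_correct (V := R_CompleteNormedModule)).
  apply ex_RInt_continuous. intros z Hz. apply Hh.
  pose proof (Rmin_glb_lt x0 y a ltac:(lra) ltac:(lra)).
  pose proof (Rmax_lub_lt x0 y b ltac:(lra) ltac:(lra)).
  lra.
Qed.

Lemma is_derive_sum_f_R0 (f : nat -> R -> R) (d : nat -> R) (x : R) (n : nat) :
  (forall k, (k <= n)%nat -> is_derive (f k) x (d k)) ->
  is_derive (fun y => sum_f_R0 (fun k => f k y) n) x (sum_f_R0 d n).
Proof.
  intros Hd. induction n as [|n IHn]; simpl.
  - now apply Hd.
  - apply (is_derive_plus _ (f (S n))); [apply IHn; intros k Hk|]; apply Hd; lia.
Qed.

Section CoupledFamilies.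
Variables (a b x0 : R).
Hypothesis Hx0 : a < x0 < b.

Definition coupled_family (f : nat -> R -> R) (u : R -> R) (g : nat -> R -> R) :=
  (forall x, f 0%nat x = 1) /\
  (forall m, f (S m) x0 = 0) /\
  (forall x, a < x < b -> u x <> 0) /\
  (forall m x, a < x < b -> is_derive (f (S m)) x (INR (S m) * u x * g m x)).

Lemma coupled_family_coef0 f u g n c :
  coupled_family f u g ->
  (forall x, a < x < b -> sum_f_R0 (fun k => c k * f k x) n = 0) ->
  c 0%nat = 0.
Proof.
  intros (Hf0 & Hfx0 & _ & _) Hs.
  specialize (Hs x0 Hx0). destruct n as [|n].
  - simpl in Hs. rewrite Hf0 in Hs. lra.
  - rewrite decomp_sum, Hf0 in Hs by lia.
    rewrite sum_eq_R0 in Hs by (intros; simpl; rewrite Hfx0; ring).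
    lra.
Qed.

Lemma coupled_family_derive_comb f u g n c :
  coupled_family f u g ->
  (forall x, a < x < b -> sum_f_R0 (fun k => c k * f k x) (S n) = 0) ->
  forall x, a < x < b -> sum_f_R0 (fun j => c (S j) * INR (S j) * g j x) n = 0.
Proof.
  intros (Hf0 & _ & Hu & Hfd) Hs x Hx.
  set (tail y := sum_f_R0 (fun j => c (S j) * f (S j) y) n).
  assert (Htail : forall y, a < y < b -> tail y = - c 0%nat).
  { intros y Hy. specialize (Hs y Hy).
    rewrite decomp_sum, Hf0 in Hs by lia. simpl in Hs. unfold tail. lra. }
  assert (Hd0 : is_derive tail x 0).
  { apply (is_derive_ext_loc (fun _ => - c 0%nat)).
    - generalize (locally_open_interval a b x Hx). apply filter_imp.
      intros y Hy. now rewrite Htail.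
    - apply (is_derive_const (K := R_AbsRing) (V := R_NormedModule)). }
  assert (Hd : is_derive tail x (u x * sum_f_R0 (fun j => c (S j) * INR (S j) * g j x) n)).
  { rewrite scal_sum.
    apply (is_derive_sum_f_R0 (fun j y => c (S j) * f (S j) y)). intros j _.
    apply (is_derive_ext (fun y => c (S j) * f (S j) y)); [reflexivity|].
    replace (c (S j) * INR (S j) * g j x * u x)
      with (c (S j) * (INR (S j) * u x * g j x)) by ring.
    apply is_derive_scal. now apply Hfd. }
  apply is_derive_unique in Hd0. apply is_derive_unique in Hd.
  rewrite Hd0 in Hd.
  destruct (Rmult_integral _ _ (eq_sym Hd)) as [Hu0|]; [|easy].
  now destruct (Hu x Hx).
Qed.

Lemma coupled_family_lin_indep n : forall f u g v,
  coupled_family f u g -> coupled_family g v f -> lin_indep_on a b n f.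
Proof.
  induction n as [|n IHn]; intros f u g v Hfg Hgf c Hs k Hk.
  - replace k with 0%nat by lia. exact (coupled_family_coef0 f u g 0 c Hfg Hs).
  - destruct k as [|j]; [exact (coupled_family_coef0 f u g _ c Hfg Hs)|].
    pose proof (coupled_family_derive_comb f u g n c Hfg Hs) as Hcomb.
    pose proof (IHn g v f u Hgf Hfg (fun j => c (S j) * INR (S j)) Hcomb j ltac:(lia)) as Hj.
    destruct (Rmult_integral _ _ Hj) as [|HS]; [easy|].
    now destruct (not_0_INR (S j)).
Qed.

End CoupledFamilies.

Section PhiPowers.
Variables (a b : R) (Phi : R -> R) (x0 : R).

Lemma Ypow_S m x :
  Ypow Phi x0 (S m) x = INR (S m) * RInt (fun xi => Ytpow Phi x0 m xi * Phi xi) x0 x.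
Proof.
  unfold Ypow, Ytpow, Xpow, Xtpow. cbn [PhiPowGen].
  rewrite Nat.odd_succ, Nat.even_succ, <- Nat.negb_even.
  destruct (Nat.even m); cbn [negb]; [|reflexivity].
  f_equal. apply RInt_ext. intros xi _. now rewrite Rinv_inv.
Qed.

Lemma Ytpow_S m x :
  Ytpow Phi x0 (S m) x = INR (S m) * RInt (fun xi => Ypow Phi x0 m xi * / Phi xi) x0 x.
Proof.
  unfold Ypow, Ytpow, Xpow, Xtpow. cbn [PhiPowGen].
  rewrite Nat.odd_succ, Nat.even_succ, <- Nat.negb_even.
  now destruct (Nat.even m).
Qed.

Lemma Ypow_S_x0 m : Ypow Phi x0 (S m) x0 = 0.
Proof. rewrite Ypow_S, RInt_point. apply Rmult_0_r. Qed.

Lemma Ytpow_S_x0 m : Ytpow Phi x0 (S m) x0 = 0.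
Proof. rewrite Ytpow_S, RInt_point. apply Rmult_0_r. Qed.

Hypothesis HPhi_cont : forall x, a < x < b -> continuous Phi x.
Hypothesis HPhi_neq0 : forall x, a < x < b -> Phi x <> 0.
Hypothesis Hx0 : a < x0 < b.

Lemma is_derive_Ypow_S m x :
  (forall y, a < y < b -> continuous (Ytpow Phi x0 m) y) -> a < x < b ->
  is_derive (Ypow Phi x0 (S m)) x (INR (S m) * Phi x * Ytpow Phi x0 m x).
Proof.
  intros Hc Hx.
  apply (is_derive_ext (fun y => INR (S m) * RInt (fun xi => Ytpow Phi x0 m xi * Phi xi) x0 y)).
  { intros y. now rewrite Ypow_S. }
  replace (INR (S m) * Phi x * Ytpow Phi x0 m x)
    with (INR (S m) * (Ytpow Phi x0 m x * Phi x)) by ring.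
  apply is_derive_scal,
    (is_derive_RInt_open_interval a b x0 x (fun xi => Ytpow Phi x0 m xi * Phi xi)); [|easy..].
  intros y Hy. apply (continuous_mult (Ytpow Phi x0 m) Phi); auto.
Qed.

Lemma is_derive_Ytpow_S m x :
  (forall y, a < y < b -> continuous (Ypow Phi x0 m) y) -> a < x < b ->
  is_derive (Ytpow Phi x0 (S m)) x (INR (S m) * / Phi x * Ypow Phi x0 m x).
Proof.
  intros Hc Hx.
  apply (is_derive_ext (fun y => INR (S m) * RInt (fun xi => Ypow Phi x0 m xi * / Phi xi) x0 y)).
  { intros y. now rewrite Ytpow_S. }
  replace (INR (S m) * / Phi x * Ypow Phi x0 m x)
    with (INR (S m) * (Ypow Phi x0 m x * / Phi x)) by ring.
  apply is_derive_scal,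
    (is_derive_RInt_open_interval a b x0 x (fun xi => Ypow Phi x0 m xi * / Phi xi)); [|easy..].
  intros y Hy. apply (continuous_mult (Ypow Phi x0 m) (fun t => / Phi t)); auto.
  apply continuous_Rinv_comp; auto.
Qed.

Lemma Ypow_Ytpow_continuous m x : a < x < b ->
  continuous (Ypow Phi x0 m) x /\ continuous (Ytpow Phi x0 m) x.
Proof.
  revert x. induction m as [|m IHm]; intros x Hx.
  - split; apply continuous_const.
  - split; apply (ex_derive_continuous (K := R_AbsRing) (V := R_NormedModule));
      eexists; [apply is_derive_Ypow_S | apply is_derive_Ytpow_S];
      auto; intros y Hy; apply IHm, Hy.
Qed.

Lemma Ypow_coupled : coupled_family a b x0 (Ypow Phi x0) Phi (Ytpow Phi x0).
Proof.
  refine (conj (fun _ => eq_refl) (conj Ypow_S_x0 (conj HPhi_neq0 _))).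
  intros m x Hx. apply is_derive_Ypow_S; [|easy].
  intros y Hy. now apply Ypow_Ytpow_continuous.
Qed.

Lemma Ytpow_coupled : coupled_family a b x0 (Ytpow Phi x0) (fun t => / Phi t) (Ypow Phi x0).
Proof.
  refine (conj (fun _ => eq_refl) (conj Ytpow_S_x0 (conj _ _))).
  - intros x Hx. now apply Rinv_neq_0_compat, HPhi_neq0.
  - intros m x Hx. apply is_derive_Ytpow_S; [|easy].
    intros y Hy. now apply Ypow_Ytpow_continuous.
Qed.

End PhiPowers.

Theorem proposition2 (a b : R) (Phi : R -> R) (x0 : R) (n : nat) :
  continuous_on_closed a b Phi ->
  (forall x, a <= x <= b -> Phi x <> 0) ->
  a < x0 < b ->
  (forall k, (k <= n)%nat -> Cn_on n a b (Ypow Phi x0 k)) ->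
  (forall k, (k <= n)%nat -> Cn_on n a b (Ytpow Phi x0 k)) ->
  lin_indep_on a b n (Ypow Phi x0) /\ lin_indep_on a b n (Ytpow Phi x0).
Proof.
  intros Hcont Hneq0 Hx0 _ _.
  assert (HPhi_cont : forall x, a < x < b -> continuous Phi x)
    by (intros x; now apply continuous_on_closed_interior).
  assert (HPhi_neq0 : forall x, a < x < b -> Phi x <> 0)
    by (intros x Hx; apply Hneq0; lra).
  pose proof (Ypow_coupled a b Phi x0 HPhi_cont HPhi_neq0 Hx0) as HY.
  pose proof (Ytpow_coupled a b Phi x0 HPhi_cont HPhi_neq0 Hx0) as HYt.
  split.
  - exact (coupled_family_lin_indep a b x0 Hx0 n _ _ _ _ HY HYt).
  - exact (coupled_family_lin_indep a b x0 Hx0 n _ _ _ _ HYt HY).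
Qed.
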